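(* In the setting below, for an integer $t \geq 1$, if $\eta \geq \eta_0$ and $|\tilde{w}_t| \leq \frac{1}{2}\gamma\hat{w}_t$, then $F(w_t) \leq 1/(8\eta)$.
   Context: Dimension $d=2$. Data $x_1,\dots,x_n\in\mathbb{R}^2$ with $\|x_i\|\le 1$, linearly separable (some $w$ has $\langle w,x_i\rangle>0$ for all $i$). $F(w) = \frac{1}{n}\sum_{i=1}^n \log(1+\exp(-\langle w, x_i\rangle))$. Maximum margin $\gamma = \max_{\|w\|=1}\min_i \langle w, x_i\rangle$ with maximizer the unit vector $w_*$; $v_*$ is a fixed unit vector orthogonal to $w_*$. Gradient descent: $w_0=0$, $w_{t+1} = w_t - \eta\nabla F(w_t)$ with constant $\eta>0$. $\hat{w}_t = \langle w_t, w_*\rangle$, $\tilde{w}_t = \langle w_t, v_*\rangle$. $\eta_0 = \max(n, \frac{32}{\gamma^2}\log\frac{256}{\gamma^2})$. *)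

From Stdlib Require Import Reals Lra Lia.
Open Scope R_scope.

Definition vec := (R * R)%type.
Definition dot (u v : vec) : R := fst u * fst v + snd u * snd v.
Definition vnorm (u : vec) : R := sqrt (dot u u).
Definition vadd (u v : vec) : vec := (fst u + fst v, snd u + snd v).
Definition vscale (a : R) (u : vec) : vec := (a * fst u, a * snd u).

Fixpoint sumR (f : nat -> R) (k : nat) : R :=
  match k with O => 0 | S k' => sumR f k' + f k' end.
Fixpoint vsum (f : nat -> vec) (k : nat) : vec :=
  match k with O => (0, 0) | S k' => vadd (vsum f k') (f k') end.

Fixpoint minR (f : nat -> R) (k : nat) : R :=
  match k with O => f O | S k' => Rmin (minR f k') (f k) end.

(* margin of w on data x_0..x_{n-1}: min_i <w, x_i>  (n >= 1) *)
Definition margin (n : nat) (x : nat -> vec) (w : vec) : R :=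
  minR (fun i => dot w (x i)) (n - 1).

Definition F (n : nat) (x : nat -> vec) (w : vec) : R :=
  / INR n * sumR (fun i => ln (1 + exp (- dot w (x i)))) n.

Definition gradF (n : nat) (x : nat -> vec) (w : vec) : vec :=
  vscale (- / INR n) (vsum (fun i => vscale (/ (1 + exp (dot w (x i)))) (x i)) n).

Fixpoint gd (n : nat) (x : nat -> vec) (eta : R) (t : nat) : vec :=
  match t with
  | O => (0, 0)
  | S t' => let w := gd n x eta t' in vadd w (vscale (- eta) (gradF n x w))
  end.

Definition eta0 (n : nat) (gamma : R) : R :=
  Rmax (INR n) (32 / gamma ^ 2 * ln (256 / gamma ^ 2)).

From Stdlib Require Import Reals Lra Lia Psatz.
Open Scope R_scope.

(* Every data point has margin at least gamma along wstar, and the gradient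
   step adds to <w, wstar> a positive combination of the <x_i, wstar>; hence
   <w_t, wstar> never decreases and already exceeds eta gamma / 2 after the
   first step.  Inside the cone |<w_t, vstar>| <= gamma <w_t, wstar> / 2 the
   component along vstar can cost at most half of that margin, so every
   <w_t, x_i> is at least gamma^2 eta / 4, and ln (1 + e^-z) <= e^-z bounds
   the risk by exp (- gamma^2 eta / 4).  The choice of eta0 makes this at
   most 1 / (8 eta). *)

Lemma minR_le (f : nat -> R) (k i : nat) : (i <= k)%nat -> minR f k <= f i.
Proof.
  induction k as [|k IH]; intros Hi; simpl.
  - replace i with 0%nat by lia; lra.
  - destruct (Nat.eq_dec i (S k)) as [->|Hne].
    + apply Rmin_r.
    + eapply Rle_trans; [apply Rmin_l | apply IH; lia].
Qed.

Lemma minR_pos (f : nat -> R) (k : nat) :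
  (forall i, (i <= k)%nat -> 0 < f i) -> 0 < minR f k.
Proof.
  induction k as [|k IH]; intros H; simpl.
  - apply H; lia.
  - apply Rmin_glb_lt; [apply IH; intros; apply H | apply H]; lia.
Qed.

Lemma sumR_ext (f g : nat -> R) (k : nat) :
  (forall i, f i = g i) -> sumR f k = sumR g k.
Proof. intros H; induction k as [|k IH]; simpl; [reflexivity|]. rewrite IH, H. reflexivity. Qed.

Lemma sumR_le (f g : nat -> R) (k : nat) :
  (forall i, (i < k)%nat -> f i <= g i) -> sumR f k <= sumR g k.
Proof.
  induction k as [|k IH]; intros H; simpl; [lra|].
  apply Rplus_le_compat; [apply IH; intros i Hi|]; apply H; lia.
Qed.

Lemma sumR_const (c : R) (k : nat) : sumR (fun _ => c) k = INR k * c.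
Proof.
  induction k as [|k IH]; simpl sumR; [simpl; ring|].
  rewrite IH, S_INR. ring.
Qed.

Lemma sumR_nonneg (f : nat -> R) (k : nat) :
  (forall i, (i < k)%nat -> 0 <= f i) -> 0 <= sumR f k.
Proof.
  intros H. rewrite <- (Rmult_0_r (INR k)), <- sumR_const. now apply sumR_le.
Qed.

Lemma dot_comm (u v : vec) : dot u v = dot v u.
Proof. unfold dot; ring. Qed.

Lemma dot_0_l (u : vec) : dot (0, 0) u = 0.
Proof. unfold dot; simpl; ring. Qed.

Lemma dot_vscale_l (a : R) (u v : vec) : dot (vscale a u) v = a * dot u v.
Proof. unfold dot, vscale; simpl; ring. Qed.

Lemma dot_vsum_l (f : nat -> vec) (k : nat) (u : vec) :
  dot (vsum f k) u = sumR (fun i => dot (f i) u) k.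
Proof.
  induction k as [|k IH]; simpl; [apply dot_0_l|].
  rewrite <- IH. unfold dot, vadd; simpl. ring.
Qed.

Lemma vnorm_sqr (u : vec) : vnorm u * vnorm u = dot u u.
Proof. apply sqrt_sqrt. unfold dot; nra. Qed.

Lemma dot_self_unit (u : vec) : vnorm u = 1 -> dot u u = 1.
Proof. intros H. rewrite <- vnorm_sqr, H. ring. Qed.

Lemma dot_self_le1 (u : vec) : vnorm u <= 1 -> dot u u <= 1.
Proof. intros H. rewrite <- vnorm_sqr. pose proof (sqrt_pos (dot u u)). unfold vnorm in *. nra. Qed.

Lemma dot_self_pos (u v : vec) : 0 < dot u v -> 0 < dot u u.
Proof.
  destruct u as [a b], v as [c d]; unfold dot; simpl; intros H.
  destruct (Rle_or_lt (a * a + b * b) 0) as [Hle|]; [|assumption].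
  assert (a = 0) by nra. assert (b = 0) by nra. subst. lra.
Qed.

Lemma vnorm_normalize (u : vec) : 0 < dot u u -> vnorm (vscale (/ vnorm u) u) = 1.
Proof.
  intros Hu.
  assert (Hs : 0 < vnorm u) by (apply sqrt_lt_R0; exact Hu).
  unfold vnorm at 1. rewrite dot_vscale_l, dot_comm, dot_vscale_l, <- vnorm_sqr.
  replace (/ vnorm u * (/ vnorm u * (vnorm u * vnorm u))) with 1 by (field; lra).
  apply sqrt_1.
Qed.

(* Lagrange's identity <u,v>^2 + det(u,v)^2 = |u|^2 |v|^2 *)
Lemma Rabs_dot_le1 (u v : vec) : dot u u = 1 -> dot v v <= 1 -> Rabs (dot u v) <= 1.
Proof.
  destruct u as [a b], v as [p q]; unfold dot; simpl; intros Hu Hv.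
  assert (Hlag : (a * p + b * q) ^ 2 + (a * q - b * p) ^ 2 = (a * a + b * b) * (p * p + q * q))
    by ring.
  pose proof (pow2_ge_0 (a * q - b * p)).
  apply Rabs_le; split; nra.
Qed.

(* In the plane, an orthonormal pair has v = ±(-u_2, u_1), so {u, v} is a basis. *)
Lemma orthonormal_decomp (u v w y : vec) :
  dot u u = 1 -> dot v v = 1 -> dot u v = 0 ->
  dot w y = dot w u * dot u y + dot w v * dot v y.
Proof.
  destruct u as [a b], v as [c d], w as [w1 w2], y as [p q]; unfold dot; simpl.
  intros Hu Hv Huv.
  set (l := a * d - b * c).
  assert (Hc : c = - (l * b)).
  { transitivity (c * (a * a + b * b) - a * (a * c + b * d)); [rewrite Hu, Huv | unfold l]; ring. }
  assert (Hd : d = l * a).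
  { transitivity (d * (a * a + b * b) - b * (a * c + b * d)); [rewrite Hu, Huv | unfold l]; ring. }
  assert (Hl : l * l = 1).
  { rewrite <- Hv, Hc, Hd. transitivity (l * l * (a * a + b * b)); [rewrite Hu|]; ring. }
  rewrite Hc, Hd.
  transitivity ((w1 * p + w2 * q) * (a * a + b * b)); [rewrite Hu; ring|].
  transitivity ((w1 * a + w2 * b) * (a * p + b * q)
                + l * l * ((- w1 * b + w2 * a) * (- b * p + a * q))); [rewrite Hl|]; ring.
Qed.

Lemma margin_le (n : nat) (x : nat -> vec) (w : vec) (i : nat) :
  (i < n)%nat -> margin n x w <= dot w (x i).
Proof. intros Hi. apply (minR_le (fun i => dot w (x i))). lia. Qed.

Lemma margin_pos (n : nat) (x : nat -> vec) (w : vec) :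
  (1 <= n)%nat -> (forall i, (i < n)%nat -> 0 < dot w (x i)) -> 0 < margin n x w.
Proof. intros Hn Hw. apply minR_pos. intros i Hi. apply Hw. lia. Qed.

Lemma max_margin_pos (n : nat) (x : nat -> vec) (wstar : vec) :
  (1 <= n)%nat ->
  (exists w, forall i, (i < n)%nat -> 0 < dot w (x i)) ->
  (forall w, vnorm w = 1 -> margin n x w <= margin n x wstar) ->
  0 < margin n x wstar.
Proof.
  intros Hn [w Hw] Hmax.
  assert (Hww : 0 < dot w w) by (apply (dot_self_pos w (x 0%nat)), Hw; lia).
  assert (Hs : 0 < vnorm w) by (apply sqrt_lt_R0; exact Hww).
  eapply Rlt_le_trans; [|apply Hmax, vnorm_normalize, Hww].
  apply margin_pos; [exact Hn|]. intros i Hi.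
  rewrite dot_vscale_l. apply Rmult_lt_0_compat; [apply Rinv_0_lt_compat; exact Hs | auto].
Qed.

Lemma dot_gd_succ (n : nat) (x : nat -> vec) (eta : R) (t : nat) (u : vec) :
  dot (gd n x eta (S t)) u = dot (gd n x eta t) u +
    eta / INR n * sumR (fun i => / (1 + exp (dot (gd n x eta t) (x i))) * dot u (x i)) n.
Proof.
  simpl gd. unfold gradF. set (w := gd n x eta t).
  rewrite <- (sumR_ext (fun i => dot (vscale (/ (1 + exp (dot w (x i)))) (x i)) u))
    by (intros i; rewrite dot_vscale_l, (dot_comm (x i) u); reflexivity).
  rewrite <- dot_vsum_l.
  unfold dot, vadd, vscale, Rdiv; simpl. ring.
Qed.

Section MarginGrowth.

Variables (n : nat) (x : nat -> vec) (eta gamma : R) (u : vec).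
Hypotheses (Hn : (1 <= n)%nat) (Heta : 0 < eta) (Hgamma : 0 <= gamma)
  (Hmargin : forall i, (i < n)%nat -> gamma <= dot u (x i)).

Let Hstep : 0 < eta / INR n.
Proof. apply Rdiv_lt_0_compat; [exact Heta | apply lt_0_INR; lia]. Qed.

Lemma dot_gd_le_succ (t : nat) : dot (gd n x eta t) u <= dot (gd n x eta (S t)) u.
Proof.
  rewrite dot_gd_succ.
  assert (0 <= sumR (fun i => / (1 + exp (dot (gd n x eta t) (x i))) * dot u (x i)) n).
  { apply sumR_nonneg. intros i Hi.
    apply Rmult_le_pos; [left; apply Rinv_0_lt_compat; pose proof (exp_pos (dot (gd n x eta t) (x i)))|
                         pose proof (Hmargin i Hi)]; lra. }
  nra.
Qed.

(* At w_0 = 0 every data point carries the weight 1 / (1 + e^0) = 1/2. *)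
Lemma dot_gd_1_ge : eta * gamma / 2 <= dot (gd n x eta 1) u.
Proof.
  rewrite dot_gd_succ. simpl gd. rewrite dot_0_l.
  assert (Hsum : sumR (fun _ => gamma / 2) n
                 <= sumR (fun i => / (1 + exp (dot (0, 0) (x i))) * dot u (x i)) n).
  { apply sumR_le. intros i Hi. rewrite dot_0_l, exp_0. pose proof (Hmargin i Hi). lra. }
  rewrite sumR_const in Hsum.
  apply Rmult_le_compat_l with (r := eta / INR n) in Hsum; [|lra].
  replace (eta / INR n * (INR n * (gamma / 2))) with (eta * gamma / 2) in Hsum
    by (field; apply not_0_INR; lia).
  lra.
Qed.

Lemma dot_gd_ge (t : nat) : (1 <= t)%nat -> eta * gamma / 2 <= dot (gd n x eta t) u.
Proof.
  induction t as [|t IH]; intros Ht; [lia|].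
  destruct t as [|t]; [exact dot_gd_1_ge|].
  eapply Rle_trans; [apply IH; lia | apply dot_gd_le_succ].
Qed.

End MarginGrowth.

Lemma dot_ge_in_cone (wstar vstar w y : vec) (gamma : R) :
  dot wstar wstar = 1 -> dot vstar vstar = 1 -> dot wstar vstar = 0 ->
  dot y y <= 1 -> 0 < gamma -> gamma <= dot wstar y ->
  Rabs (dot w vstar) <= 1 / 2 * gamma * dot w wstar ->
  gamma * dot w wstar / 2 <= dot w y.
Proof.
  intros Hw Hv Hwv Hy Hg Hmarg Hcone.
  rewrite (orthonormal_decomp wstar vstar w y Hw Hv Hwv).
  assert (Hvy : Rabs (dot vstar y) <= 1) by (apply Rabs_dot_le1; assumption).
  assert (Hhat : 0 <= dot w wstar) by (pose proof (Rabs_pos (dot w vstar)); nra).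
  assert (Hcross : - Rabs (dot w vstar) <= dot w vstar * dot vstar y).
  { pose proof (Rabs_pos (dot w vstar)).
    assert (Rabs (dot w vstar * dot vstar y) <= Rabs (dot w vstar))
      by (rewrite Rabs_mult; pose proof (Rabs_pos (dot vstar y)); nra).
    pose proof (Rle_abs (- (dot w vstar * dot vstar y))). rewrite Rabs_Ropp in *. lra. }
  nra.
Qed.

Lemma ln_le_pred (z : R) : 0 < z -> ln z <= z - 1.
Proof. intros Hz. pose proof (exp_ineq1_le (ln z)). rewrite exp_ln in *; lra. Qed.

Lemma exp_le_compat (p q : R) : p <= q -> exp p <= exp q.
Proof. intros [Hlt|<-]; [left; apply exp_increasing|right]; auto. Qed.

Lemma F_le_exp (n : nat) (x : nat -> vec) (w : vec) (a : R) :
  (1 <= n)%nat -> (forall i, (i < n)%nat -> a <= dot w (x i)) -> F n x w <= exp (- a).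
Proof.
  intros Hn Ha. unfold F.
  assert (HnR : 0 < INR n) by (apply lt_0_INR; lia).
  assert (Hsum : sumR (fun i => ln (1 + exp (- dot w (x i)))) n <= sumR (fun _ => exp (- a)) n).
  { apply sumR_le. intros i Hi.
    pose proof (exp_pos (- dot w (x i))).
    pose proof (ln_le_pred (1 + exp (- dot w (x i)))).
    pose proof (exp_le_compat (- dot w (x i)) (- a)).
    pose proof (Ha i Hi). lra. }
  rewrite sumR_const in Hsum.
  apply Rmult_le_compat_l with (r := / INR n) in Hsum; [|left; apply Rinv_0_lt_compat; lra].
  replace (/ INR n * (INR n * exp (- a))) with (exp (- a)) in Hsum by (field; lra).
  exact Hsum.
Qed.

(* With a = g^2 eta / 4, the hypothesis reads ln (256 / g^2) <= a / 8, and
   8 eta = (256 / g^2) (a / 8) <= e^(a/8) e^(a/8). *)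
Lemma exp_ge_of_step_size (g eta : R) :
  0 < g -> 0 <= eta -> 32 / g ^ 2 * ln (256 / g ^ 2) <= eta -> 8 * eta <= exp (g ^ 2 * eta / 4).
Proof.
  intros Hg Heta Hbound.
  set (a := g ^ 2 * eta / 4).
  assert (Hg2 : 0 < g ^ 2) by (apply pow_lt; lra).
  assert (Hc : 0 < 256 / g ^ 2) by (apply Rdiv_lt_0_compat; lra).
  assert (Hln : 256 / g ^ 2 <= exp (a / 8)).
  { rewrite <- (exp_ln (256 / g ^ 2)) by exact Hc. apply exp_le_compat.
    apply Rmult_le_compat_l with (r := g ^ 2 / 32) in Hbound; [|lra].
    replace (g ^ 2 / 32 * (32 / g ^ 2 * ln (256 / g ^ 2))) with (ln (256 / g ^ 2)) in Hbound
      by (field; lra).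
    unfold a. lra. }
  assert (Hlin : a / 8 <= exp (a / 8)) by (pose proof (exp_ineq1_le (a / 8)); lra).
  assert (Hsq : exp (a / 8) * exp (a / 8) <= exp a).
  { rewrite <- exp_plus. apply exp_le_compat. unfold a. nra. }
  replace (8 * eta) with (256 / g ^ 2 * (a / 8)) by (unfold a; field; lra).
  eapply Rle_trans; [|exact Hsq].
  apply Rmult_le_compat; [lra | unfold a; nra | exact Hln | exact Hlin].
Qed.

Theorem lemma13 (n : nat) (x : nat -> vec) (wstar vstar : vec) (gamma eta : R) (t : nat) :
  (1 <= n)%nat ->
  (forall i, (i < n)%nat -> vnorm (x i) <= 1) ->
  (exists w, forall i, (i < n)%nat -> 0 < dot w (x i)) ->
  vnorm wstar = 1 ->
  (forall w, vnorm w = 1 -> margin n x w <= margin n x wstar) ->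
  gamma = margin n x wstar ->
  vnorm vstar = 1 ->
  dot wstar vstar = 0 ->
  0 < eta ->
  (1 <= t)%nat ->
  eta0 n gamma <= eta ->
  Rabs (dot (gd n x eta t) vstar) <= 1 / 2 * gamma * dot (gd n x eta t) wstar ->
  F n x (gd n x eta t) <= 1 / (8 * eta).
Proof.
  intros Hn Hx Hsep Hws Hmax Hgamma Hvs Horth Heta Ht Heta0 Hcone.
  assert (Hg : 0 < gamma) by (rewrite Hgamma; apply max_margin_pos; assumption).
  assert (Hmarg : forall i, (i < n)%nat -> gamma <= dot wstar (x i))
    by (intros i Hi; rewrite Hgamma; apply margin_le, Hi).
  set (w := gd n x eta t) in *.
  assert (Hhat : eta * gamma / 2 <= dot w wstar)
    by (apply (dot_gd_ge n x eta gamma wstar); auto; lra).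
  assert (Hz : forall i, (i < n)%nat -> gamma ^ 2 * eta / 4 <= dot w (x i)).
  { intros i Hi.
    assert (gamma * dot w wstar / 2 <= dot w (x i))
      by (apply (dot_ge_in_cone wstar vstar); auto using dot_self_unit, dot_self_le1).
    nra. }
  assert (H8 : 8 * eta <= exp (gamma ^ 2 * eta / 4))
    by (apply exp_ge_of_step_size; [exact Hg | lra | eapply Rle_trans; [apply Rmax_r | exact Heta0]]).
  eapply Rle_trans; [apply (F_le_exp n x w _ Hn Hz)|].
  rewrite exp_Ropp, !Rdiv_1_l. apply Rinv_le_contravar; lra.
Qed.
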